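(* With the maps $\mathrm{Tr}_1:H(m,1,1)\to\mathcal{A}_m$ and $\mathrm{Tr}_2:H(m,1,2)\to H(m,1,1)$ defined below, for all integers $a$ and $b$, $$\mathrm{Tr}_1\bigl(\mathrm{Tr}_2(\sigma_1^{-1}\tau^a\sigma_1\tau^b\sigma_1)\bigr)=D\,\mu_{a+b},$$ where $\mu_c:=\mathrm{Tr}_1(\tau^c)$ for $c\in\mathbb{Z}$.
   Context: $\mathcal{A}_m:=\mathbb{C}[q^{\pm1},v_1^{\pm1},\dots,v_m^{\pm1}]$ for finite $m$, $\mathcal{A}_\infty:=\mathbb{C}[q,q^{-1}]$; $\mathfrak{E}_m:=\{0,\dots,m-1\}$ for finite $m$, $\mathfrak{E}_\infty:=\mathbb{Z}$. $H(m,1,k)$ is the $\mathcal{A}_m$-algebra generated by $\tau,\tau^{-1},\sigma_1,\dots,\sigma_{k-1}$ subject to $\tau\tau^{-1}=\tau^{-1}\tau=1$, braid relations for the $\sigma_i$, $\tau\sigma_1\tau\sigma_1=\sigma_1\tau\sigma_1\tau$, $\tau\sigma_i=\sigma_i\tau$ ($i>1$), $\sigma_i^2=(q-q^{-1})\sigma_i+1$, and $(\tau-v_1)\cdots(\tau-v_m)=0$ if $m<\infty$; $H(m,1,0)=\mathcal{A}_m$ and $H(m,1,1)\subset H(m,1,2)$ is the subalgebra generated by $\tau^{\pm1}$. Fix $D\in\mathcal{A}_m$ and $\mu_a\in\mathcal{A}_m$ ($a\in\mathfrak{E}_m\setminus\{0\}$), $\mu_0:=1$. $\mathrm{Tr}_1$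 is the $\mathcal{A}_m$-linear map on $H(m,1,1)$ (basis $\tau^a$, $a\in\mathfrak{E}_m$) with $\mathrm{Tr}_1(\tau^a)=\mu_a$. $\mathrm{Tr}_2$ is the $\mathcal{A}_m$-linear map $H(m,1,2)\to H(m,1,1)$ defined on the basis $\tau^a\sigma_1u$ and $\sigma_1^{-1}\tau^a\sigma_1u$ ($a\in\mathfrak{E}_m$, $u$ in a basis of $H(m,1,1)$) by $\mathrm{Tr}_2(\tau^a\sigma_1u)=D\tau^au$ and $\mathrm{Tr}_2(\sigma_1^{-1}\tau^a\sigma_1u)=\mu_au$. *)

From HB Require Import structures.
From mathcomp Require Import all_boot all_order all_algebra.
Set Implicit Arguments. Unset Strict Implicit. Unset Printing Implicit Defensive.
Import Order.TTheory GRing.Theory Num.Theory.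
Local Open Scope ring_scope.

(* m : option nat;  Some n  is the finite case m = n,  None  is m = infinity. *)

Definition in_Em (m : option nat) (a : int) : bool :=
  if m is Some n then (0 <= a) && (a < n%:Z) else true.

Definition zpow (A : nzRingType) (x xi : A) (a : int) : A :=
  match a with
  | Posz n => x ^+ n
  | Negz n => xi ^+ n.+1
  end.

Definition is_basis (R : nzRingType) (V : lmodType R) (I : eqType)
    (P : pred I) (f : I -> V) : Prop :=
  (forall x : V, exists (s : seq I) (c : I -> R),
      all P s /\ x = \sum_(i <- s) c i *: f i) /\
  (forall (s : seq I) (c : I -> R), uniq s -> all P s ->
      \sum_(i <- s) c i *: f i = 0 -> forall i, i \in s -> c i = 0).

Definition cyclo_rel (R : comNzRingType) (A : algType R) (m : option nat)
    (v : nat -> R) (t : A) : Prop :=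
  if m is Some n then \prod_(i < n) (t - (v i.+1)%:A) = 0 else True.

(* The traces are only prescribed on basis monomials, but the cyclotomic
   relation with invertible v_i writes every power tau^x as a combination of
   basis powers whose coefficients do not depend on the algebra.  So linear maps
   agreeing on basis powers of tau in H(m,1,2) and in H(m,1,1) agree on all
   powers, which gives Tr2 (tau^x sigma tau^z) = D tau^(x+z) and
   Tr1 Tr2 (sigma^-1 tau^x sigma tau^z) = mu_x mu_z for all integers x, z.
   Writing the middle sigma as sigma^-1 + (q - q^-1) reduces the claim to the
   trace of sigma^-1 tau^a sigma^-1 tau^b sigma.  Since sigma tau sigma commutes
   with tau, moving one factor tau from the first to the last slot changes that
   trace by (q - q^-1) (u (x + 1) - u (a - 1 - x)) with u x = mu_x mu_(a+b-x);
   these corrections telescope once the second half is summed in reverse order,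
   leaving D mu_(a+b) - (q - q^-1) mu_0 mu_(a+b). *)

From HB Require Import structures.
From mathcomp Require Import all_boot all_order all_algebra.
From mathcomp Require Import zify ring.
Set Implicit Arguments. Unset Strict Implicit. Unset Printing Implicit Defensive.
Import GRing.Theory.
Local Open Scope ring_scope.

Lemma int_diff_nat (z : int) : exists m n : nat, z = m%:Z - n%:Z.
Proof. by case: z => n; [exists n, 0%N | exists 0%N, n.+1]; rewrite ?subr0 ?sub0r. Qed.

Section ZPow.

Variables (A : nzRingType) (x xi : A).
Hypotheses (xK : x * xi = 1) (Kx : xi * x = 1).

Lemma zpow_subn (m n : nat) : zpow x xi (m%:Z - n%:Z) = x ^+ m * xi ^+ n.
Proof.
have cx : GRing.comm x xi by rewrite /GRing.comm xK Kx.
have xnK k : x ^+ k * xi ^+ k = 1 by rewrite -exprMn_comm // xK expr1n.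
case: (leqP n m) => [le_nm | lt_mn].
  by rewrite subzn //= -[in RHS](subnK le_nm) exprD -mulrA xnK mulr1.
have -> : m%:Z - n%:Z = - (n - m)%N%:Z by rewrite -subzn ?opprB // ltnW.
case E: (n - m)%N => [|k] /=; first by move: lt_mn; rewrite -subn_gt0 E.
by rewrite -E -[in RHS](subnK (ltnW lt_mn)) addnC exprD mulrA xnK mul1r.
Qed.

Lemma zpowD a b : zpow x xi (a + b) = zpow x xi a * zpow x xi b.
Proof.
have [m1 [n1 ->]] := int_diff_nat a; have [m2 [n2 ->]] := int_diff_nat b.
have -> : m1%:Z - n1%:Z + (m2%:Z - n2%:Z) = (m1 + m2)%N%:Z - (n1 + n2)%N%:Z.
  by rewrite !PoszD; ring.
have cx : GRing.comm (x ^+ m2) (xi ^+ n1).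
  by apply/commrX/commr_sym/commrX; rewrite /GRing.comm xK Kx.
by rewrite !zpow_subn // !exprD -!mulrA (mulrA (x ^+ m2)) cx !mulrA.
Qed.

Lemma zpow0 : zpow x xi 0 = 1.
Proof. by []. Qed.

Lemma zpowS a : zpow x xi (a + 1) = zpow x xi a * x.
Proof. by rewrite zpowD /= expr1. Qed.

Lemma commr_zpow y a : GRing.comm y x -> GRing.comm y (zpow x xi a).
Proof.
move=> cyx; have cyxi : GRing.comm y xi.
  by rewrite /GRing.comm -[LHS]mul1r -Kx -mulrA (mulrA x) -cyx -mulrA xK mulr1.
have [m [n ->]] := int_diff_nat a.
by rewrite zpow_subn; apply/commrM/commrX/cyxi/commrX.
Qed.

End ZPow.

Lemma linear_sum_scale (R : comNzRingType) (U V : lmodType R) (f : U -> V) :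
  linear f -> forall (I : Type) (r : seq I) (c : I -> R) (y : I -> U),
  f (\sum_(i <- r) c i *: y i) = \sum_(i <- r) c i *: f (y i).
Proof.
move=> lin_f I r c y.
pose F : {linear U -> V} := HB.pack f (GRing.isLinear.Build _ _ _ _ f lin_f).
by rewrite [LHS](linear_sum F); apply: eq_bigr => i _; apply: linearZ_LR F _ _.
Qed.

Lemma horner_alg_rmodp (R : comNzRingType) (A : algType R) (u : A) (P p : {poly R}) :
  P \is monic -> horner_alg u P = 0 ->
  horner_alg u p = \sum_(i < (size P).-1) (Pdiv.Ring.rmodp p P)`_i *: u ^+ i.
Proof.
move=> monP uP; set r := Pdiv.Ring.rmodp p P.
have size_r : (size r <= (size P).-1)%N.
  by rewrite -ltnS prednK ?Pdiv.Ring.ltn_rmodp ?monic_neq0 // size_poly_gt0 monic_neq0.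
have rE : r = \poly_(i < (size P).-1) r`_i.
  apply/polyP => i; rewrite coef_poly; case: ltnP => // le_i.
  by rewrite nth_default // (leq_trans size_r le_i).
rewrite (Pdiv.RingMonic.rdivp_eq monP p) rmorphD rmorphM /= uP mulr0 add0r -/r.
rewrite {1}rE poly_def linear_sum; apply: eq_bigr => i _.
by rewrite linearZ /= rmorphXn /= horner_algX mulr_algl.
Qed.

Lemma horner_alg_inverse (R : comUnitRingType) (P : {poly R}) :
  P.[0] \is a GRing.unit -> exists W : {poly R}, forall (A : algType R) (u ui : A),
  u * ui = 1 -> horner_alg u P = 0 -> horner_alg u W = ui.
Proof.
move=> P0_unit.
have [Q PQ] : exists Q, P - (P.[0])%:P = Q * ('X - 0%:P).
  by apply/factor_theorem; rewrite /root hornerD hornerN hornerC subrr.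
exists (- (P.[0])^-1 *: Q) => A u ui uK uP.
have QuK : horner_alg u Q * u = - (P.[0])%:A.
  by have := congr1 (horner_alg u) PQ; rewrite subr0 !rmorphB rmorphM /= uP
     horner_algX horner_algC sub0r => <-.
rewrite linearZ /= mulr_algl -[horner_alg u Q]mulr1 -uK mulrA QuK mulNr -scalerAl mul1r.
by rewrite scalerN scaleNr opprK scalerA mulVr ?scale1r.
Qed.

Definition cyclo_poly (R : nzRingType) (n : nat) (v : nat -> R) : {poly R} :=
  \prod_(i < n) ('X - (v i.+1)%:P).

Lemma horner_alg_cyclo_poly (R : comNzRingType) (A : algType R) n v (u : A) :
  cyclo_rel (Some n) v u -> horner_alg u (cyclo_poly n v) = 0.
Proof.
move=> <-; rewrite rmorph_prod; apply: eq_bigr => i _.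
by rewrite rmorphB /= horner_algX horner_algC.
Qed.

Lemma zpow_cyclo_span (R : comUnitRingType) (m : option nat) (v : nat -> R) :
  (forall i, (0 < i)%N -> (if m is Some n then (i <= n)%N else false) ->
     v i \is a GRing.unit) ->
  forall x : int, exists (js : seq int) (c : int -> R), all (in_Em m) js /\
   forall (A : algType R) (u ui : A), u * ui = 1 -> cyclo_rel m v u ->
     zpow u ui x = \sum_(j <- js) c j *: zpow u ui j.
Proof.
case: m => [n|] v_unit x; last first.
  by exists [:: x], (fun=> 1); split=> // A u ui _ _; rewrite big_seq1 scale1r.
set P := cyclo_poly n v.
have monP : P \is monic by apply: monic_prod_XsubC.
have sizeP : size P = n.+1.
  by rewrite size_prod_XsubC -[index_enum _]enumT size_enum_ord.
have [W W_inv] : exists W : {poly R}, forall (A : algType R) (u ui : A),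
    u * ui = 1 -> horner_alg u P = 0 -> horner_alg u W = ui.
  apply: horner_alg_inverse; rewrite horner_prod; apply: unitr_prod => i _.
  by rewrite hornerXsubC sub0r unitrN; apply: v_unit.
pose E := if x is Negz k then W ^+ k.+1 else 'X^(absz x).
pose r := Pdiv.Ring.rmodp E P.
exists [seq i%:Z | i <- iota 0 n], (fun j => r`_(absz j)); split.
  by apply/allP => j /mapP [i]; rewrite mem_iota => /andP[_ lt_in] ->.
move=> A u ui uK u_cyclo; have uP := horner_alg_cyclo_poly u_cyclo.
have -> : zpow u ui x = horner_alg u E.
  rewrite /E; clear r E.
  by case: x => k; rewrite rmorphXn /= ?horner_algX ?(W_inv _ _ _ uK uP).
have -> : iota 0 n = index_iota 0 n by rewrite /index_iota subn0.
by rewrite (horner_alg_rmodp E monP uP) sizeP big_map big_mkord.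
Qed.

Lemma linear_zpow_ext (R : comUnitRingType) (m : option nat) (v : nat -> R)
    (V : lmodType R) (A1 A2 : algType R) (u1 ui1 : A1) (u2 ui2 : A2)
    (L1 : A1 -> V) (L2 : A2 -> V) :
  (forall i, (0 < i)%N -> (if m is Some n then (i <= n)%N else false) ->
     v i \is a GRing.unit) ->
  u1 * ui1 = 1 -> cyclo_rel m v u1 -> u2 * ui2 = 1 -> cyclo_rel m v u2 ->
  linear L1 -> linear L2 ->
  (forall j, in_Em m j -> L1 (zpow u1 ui1 j) = L2 (zpow u2 ui2 j)) ->
  forall x, L1 (zpow u1 ui1 x) = L2 (zpow u2 ui2 x).
Proof.
move=> v_unit u1K u1_cyclo u2K u2_cyclo lin1 lin2 eq_L x.
have [js [c [js_Em zpowE]]] := zpow_cyclo_span v_unit x.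
rewrite (zpowE _ u1 ui1) // (zpowE _ u2 ui2) // !linear_sum_scale //.
by apply: eq_big_seq => j /(allP js_Em) Em_j; rewrite eq_L.
Qed.

Section HeckeRelations.

Variables (R : comNzRingType) (A : algType R) (t ti s si : A) (c : R).
Hypotheses (tK : t * ti = 1) (Kt : ti * t = 1) (Ks : si * s = 1).
Hypotheses (braid : t * s * t * s = s * t * s * t) (quad : s * s = c *: s + 1).

Local Notation Z := (zpow t ti).

Lemma invs_quadratic : si = s - c%:A.
Proof.
have : si * (s * s) = s by rewrite mulrA Ks mul1r.
by rewrite quad mulrDr mulr1 -scalerAr Ks => <-; rewrite addrC addKr.
Qed.

Lemma commr_t_zpow a : GRing.comm t (Z a).
Proof. exact/commr_zpow/commr_refl. Qed.

Lemma mul_t_conj_zpow a :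
  t * (si * Z a * s) = c *: (t * s * Z a) + si * Z a * s * t - c *: (Z (a + 1) * s).
Proof.
have sts_t : GRing.comm (s * t * s) t by rewrite /GRing.comm !mulrA braid.
have conj_sts : si * Z a * s * t * s = t * s * Z a.
  by rewrite -!mulrA (mulrA s) (mulrA _ s) -(commr_zpow tK Kt _ sts_t) !mulrA Ks mul1r.
have tsZs : t * s * Z a * s = c *: (t * s * Z a) + si * Z a * s * t.
  by rewrite -[in LHS]conj_sts -mulrA quad mulrDr mulr1 -scalerAr conj_sts.
rewrite {1}invs_quadratic !mulrBl mulrBr !mulrA tsZs zpowS // -commr_t_zpow.
by rewrite mulr_algr -!scalerAl.
Qed.

End HeckeRelations.

Lemma telescope_reflected (V : zmodType) (G u : int -> V) (a : int) :
  (forall x, G (x + 1) - G x = u (x + 1) - u (a - 1 - x)) -> G a - G 0 = u a - u 0.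
Proof.
move=> dG.
have shift x0 (n : nat) :
    a = x0 *+ 2 + n%:Z -> G (x0 + n%:Z) - G x0 = u (x0 + n%:Z) - u x0.
  move=> a_eq.
  have tele (f : int -> V) : f (x0 + n%:Z) - f x0 =
      \sum_(0 <= k < n) (f (x0 + k.+1%:Z) - f (x0 + k%:Z)).
    by rewrite (telescope_sumr (fun k => f (x0 + k%:Z))) // addr0.
  rewrite tele (tele u) [in RHS]sumrB.
  rewrite [X in _ = _ - X](big_nat_rev _ _ _ _ _ (fun k => u (x0 + k%:Z))) -sumrB.
  apply: eq_big_nat => k /andP[_ lt_kn].
  have -> : x0 + k.+1%:Z = x0 + k%:Z + 1 by lia.
  by rewrite dG; congr (_ - u _); rewrite a_eq; lia.
case: a dG shift => n dG shift.
  by have := shift 0 n; rewrite !add0r; apply.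
have := shift (Negz n) n.+1; rewrite NegzE addNr => /(_ _)/(congr1 -%R).
by rewrite !opprB; apply; lia.
Qed.

Section Traces.

Variables (R : comUnitRingType) (m : option nat) (v : nat -> R) (c D : R).
Variables (mu : int -> R) (H1 H2 : algType R) (t1 t1i : H1) (t ti s si : H2).
Variables (Tr1 : {linear H1 -> R^o}) (Tr2 : {linear H2 -> H1}).
Hypothesis v_unit : forall i, (0 < i)%N ->
  (if m is Some n then (i <= n)%N else false) -> v i \is a GRing.unit.
Hypotheses (t1K : t1 * t1i = 1) (Kt1 : t1i * t1 = 1) (t1_cyclo : cyclo_rel m v t1).
Hypotheses (tK : t * ti = 1) (Kt : ti * t = 1) (Ks : si * s = 1).
Hypotheses (t_cyclo : cyclo_rel m v t) (braid : t * s * t * s = s * t * s * t).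
Hypothesis quad : s * s = c *: s + 1.
Hypothesis Tr1_basis : forall a, in_Em m a -> Tr1 (zpow t1 t1i a) = mu a.
Hypothesis Tr2_basis : forall a b, in_Em m a -> in_Em m b ->
  Tr2 (zpow t ti a * s * zpow t ti b) = D *: zpow t1 t1i (a + b).
Hypothesis Tr2_basis_conj : forall a b, in_Em m a -> in_Em m b ->
  Tr2 (si * zpow t ti a * s * zpow t ti b) = mu a *: zpow t1 t1i b.

Local Notation Z := (zpow t ti).
Local Notation Z1 := (zpow t1 t1i).
Local Notation trace X := (Tr1 (Tr2 X)).
Local Notation muZ a := (Tr1 (Z1 a)).

Local Notation ext L1 L2 :=
  (linear_zpow_ext (L1 := L1) (L2 := L2) v_unit tK t_cyclo t1K t1_cyclo).

Lemma traceD X Y : trace (X + Y) = trace X + trace Y.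
Proof. by rewrite !linearD. Qed.

Lemma traceB X Y : trace (X - Y) = trace X - trace Y.
Proof. by rewrite !linearB. Qed.

Lemma traceZ k X : trace (k *: X) = k * trace X.
Proof. by rewrite !linearZ. Qed.

Lemma Tr2_zpow_s_zpow x z : Tr2 (Z x * s * Z z) = D *: Z1 (x + z).
Proof.
rewrite zpowD //; apply: (ext (fun X => Tr2 (X * s * Z z)) (fun X => D *: (X * Z1 z)))
  => [k X Y | k X Y | j Em_j] /=.
- by rewrite !mulrDl -!scalerAl linearP.
- by rewrite mulrDl scalerDr -scalerAl !scalerA mulrC.
apply: (ext (fun X => Tr2 (Z j * s * X)) (fun X => D *: (Z1 j * X)))
  => [k X Y | k X Y | l Em_l] /=.
- by rewrite !mulrDr -!scalerAr linearP.
- by rewrite mulrDr scalerDr -scalerAr !scalerA mulrC.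
by rewrite Tr2_basis // zpowD.
Qed.

Lemma trace_si_zpow_s_zpow x z : trace (si * Z x * s * Z z) = muZ x * muZ z.
Proof.
have Tr2_conj j : in_Em m j -> Tr2 (si * Z j * s * Z z) = mu j *: Z1 z.
  move=> Em_j.
  apply: (ext (fun X => Tr2 (si * Z j * s * X)) (fun X => mu j *: X))
    => [k X Y | k X Y | l Em_l] /=.
  - by rewrite !mulrDr -!scalerAr linearP.
  - by rewrite scalerDr !scalerA mulrC.
  exact: Tr2_basis_conj.
apply: (ext (fun X => trace (si * X * s * Z z)) (fun X => Tr1 X * muZ z))
  => [k X Y | k X Y | j Em_j] /=.
- by rewrite !mulrDr !mulrDl -!scalerAr -!scalerAl !linearP.
- by rewrite linearP mulrDl -scalerAl.
by rewrite Tr2_conj // linearZ Tr1_basis.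
Qed.

Lemma trace_si_si_zpowS x b y :
  trace (si * Z (x + 1) * si * Z b * s * Z y) = trace (si * Z x * si * Z b * s * Z (y + 1))
    + c * (muZ (x + 1) * muZ (b + y) - muZ (x + b + 1) * muZ y).
Proof.
have -> : si * Z (x + 1) * si * Z b * s * Z y = c *: (si * Z (x + 1) * s * Z (b + y))
    + si * Z x * si * Z b * s * Z (y + 1) - c *: (si * Z (x + b + 1) * s * Z y).
  rewrite !zpowS // !zpowD //.
  transitivity (si * Z x * (t * (si * Z b * s)) * Z y); first by rewrite !mulrA.
  rewrite (mul_t_conj_zpow tK Kt Ks braid quad) zpowS //.
  rewrite mulrBr mulrDr -!scalerAr !mulrBl !mulrDl -!scalerAl !mulrA.
  by rewrite -!mulrA (commr_t_zpow tK Kt y).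
by rewrite traceB traceD !traceZ !trace_si_zpow_s_zpow; ring.
Qed.

Lemma trace_si_si_zpow b y :
  trace (si * Z 0 * si * Z b * s * Z y) = D * muZ (b + y) - c * (muZ b * muZ y).
Proof.
have si2 : si * si = 1 - c *: si.
  by rewrite [X in si * X](invs_quadratic Ks quad) mulrBr Ks mulr_algr.
by rewrite zpow0 mulr1 si2 !mulrBl mul1r -!scalerAl traceB traceZ
  Tr2_zpow_s_zpow trace_si_zpow_s_zpow linearZ.
Qed.

Lemma trace_si_zpow_si_zpow_s a b :
  trace (si * Z a * si * Z b * s) = D * muZ (a + b) - c * (muZ 0 * muZ (a + b)).
Proof.
pose G x := trace (si * Z x * si * Z b * s * Z (a - x)).
pose u x := c * (muZ x * muZ (a + b - x)).
have step x : G (x + 1) - G x = u (x + 1) - u (a - 1 - x).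
  rewrite /G /u (_ : a - x = a - (x + 1) + 1); last by lia.
  rewrite trace_si_si_zpowS addrAC subrr add0r.
  have -> : b + (a - (x + 1)) = a + b - (x + 1) by lia.
  have -> : a + b - (a - 1 - x) = x + b + 1 by lia.
  have -> : a - (x + 1) = a - 1 - x by lia.
  ring.
have := telescope_reflected step; rewrite /G /u subrr zpow0 mulr1 !subr0.
rewrite trace_si_si_zpow (addrC b a) (_ : a + b - a = b); last by lia.
by move/eqP; rewrite subr_eq => /eqP ->; ring.
Qed.

Lemma trace_si_zpow_s_zpow_s a b : trace (si * Z a * s * Z b * s) = D * muZ (a + b).
Proof.
have s_si : s = si + c%:A by rewrite (invs_quadratic Ks quad) subrK.
rewrite {1}s_si mulrDr mulrDl mulrDl mulr_algr -!scalerAl traceD traceZ.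
have := trace_si_zpow_s_zpow (a + b) 0; rewrite zpow0 mulr1 zpowD // !mulrA => ->.
by rewrite trace_si_zpow_si_zpow_s; ring.
Qed.

End Traces.

Theorem mainTheorem9
  (R : comUnitRingType) (m : option nat) (q : R) (v : nat -> R)
  (D : R) (mu : int -> R)
  (H1 : algType R) (t1 t1i : H1)
  (H2 : algType R) (t ti s si : H2)
  (Tr1 : {linear H1 -> R^o}) (Tr2 : {linear H2 -> H1}) :
  q \is a GRing.unit ->
  (forall i, (0 < i)%N -> (if m is Some n then (i <= n)%N else false) ->
     v i \is a GRing.unit) ->
  t1 * t1i = 1 -> t1i * t1 = 1 -> cyclo_rel m v t1 ->
  is_basis (in_Em m) (zpow t1 t1i) ->
  t * ti = 1 -> ti * t = 1 -> s * si = 1 -> si * s = 1 ->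
  t * s * t * s = s * t * s * t ->
  s * s = (q - q^-1) *: s + 1 ->
  cyclo_rel m v t ->
  is_basis (fun x : bool * int * int => in_Em m x.1.2 && in_Em m x.2)
    (fun x : bool * int * int =>
       if x.1.1 then zpow t ti x.1.2 * s * zpow t ti x.2
       else si * zpow t ti x.1.2 * s * zpow t ti x.2) ->
  mu 0 = 1 ->
  (forall a, in_Em m a -> Tr1 (zpow t1 t1i a) = mu a) ->
  (forall a b, in_Em m a -> in_Em m b ->
     Tr2 (zpow t ti a * s * zpow t ti b) = D *: zpow t1 t1i (a + b)) ->
  (forall a b, in_Em m a -> in_Em m b ->
     Tr2 (si * zpow t ti a * s * zpow t ti b) = mu a *: zpow t1 t1i b) ->
  forall a b : int,
    Tr1 (Tr2 (si * zpow t ti a * s * zpow t ti b * s))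
    = D * Tr1 (zpow t1 t1i (a + b)).
Proof.
move=> _ v_unit t1K Kt1 t1_cyclo _ tK Kt _ Ks braid quad t_cyclo _ _.
exact: (trace_si_zpow_s_zpow_s v_unit t1K Kt1 t1_cyclo tK Kt Ks t_cyclo braid quad).
Qed.
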